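(* Let $T$ be a ring which is integral over its center $C(T)$ and satisfies $J(T)=0$. Then either $T$ has a maximal subring or $T$ is a commutative ring.
   Context: All rings are associative with identity $1\neq 0$, and subrings contain the identity of the ambient ring. A maximal subring of a ring $T$ is a proper subring $S\subsetneq T$ such that there is no subring strictly between $S$ and $T$. $C(T)$ denotes the center of $T$. $T$ is integral over its center if every $t\in T$ is a root of a monic polynomial of degree $\geq 1$ with coefficients in $C(T)$. $J(T)$ is the Jacobson radical of $T$. *)

From HB Require Import structures.
From mathcomp Require Import all_boot all_order all_algebra.
Set Implicit Arguments. Unset Strict Implicit. Unset Printing Implicit Defensive.
Import GRing.Theory.
Local Open Scope ring_scope.

(* Rings: associative with identity 1 <> 0, i.e. MathComp nzRingType.
   Subsets are Prop-valued predicates T -> Prop (no decidability assumed). *)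

Definition is_subring (T : nzRingType) (S : T -> Prop) : Prop :=
  [/\ S 1, (forall x y, S x -> S y -> S (x - y)) & (forall x y, S x -> S y -> S (x * y))].

Definition is_maximal_subring (T : nzRingType) (S : T -> Prop) : Prop :=
  [/\ is_subring S, (exists t, ~ S t) &
      (forall S' : T -> Prop, is_subring S' -> (forall x, S x -> S' x) ->
         (forall x, S' x -> S x) \/ (forall x, S' x))].

Definition center (T : nzRingType) (c : T) : Prop := forall t : T, c * t = t * c.

Definition integral_over_center (T : nzRingType) : Prop :=
  forall t : T, exists p : {poly T},
    [/\ p \is monic, (1 < size p)%N, (forall i, center p`_i) & p.[t] = 0].

Definition is_left_ideal (T : nzRingType) (I : T -> Prop) : Prop :=
  [/\ I 0, (forall x y, I x -> I y -> I (x - y)) & (forall r x, I x -> I (r * x))].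

Definition is_maximal_left_ideal (T : nzRingType) (M : T -> Prop) : Prop :=
  [/\ is_left_ideal M, (exists t, ~ M t) &
      (forall I : T -> Prop, is_left_ideal I -> (forall x, M x -> I x) ->
         (forall x, I x -> M x) \/ (forall x, I x))].

Definition jacobson (T : nzRingType) (x : T) : Prop :=
  forall M : T -> Prop, is_maximal_left_ideal M -> M x.

Definition is_commutative_ring (T : nzRingType) : Prop :=
  forall x y : T, x * y = y * x.

(* Pick a, b with ab <> ba.  Since J(T) = 0, some maximal left ideal M misses
   ab - ba.  If M is not two-sided, its idealizer {x | M x <= M} is a proper
   subring over which T is generated by a single element.  Otherwise T/M is a
   division ring, and the elements commuting with a modulo M form a proper
   subring K (b is not in K).  Since a is integral over the center, every
   family of more than deg p elements of T/M is left dependent over K, so T is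
   generated over K by finitely many elements.  In both cases T is finitely
   generated over a proper subring, and Zorn's lemma yields a maximal one. *)

From mathcomp Require Import all_boot all_order all_algebra.
From mathcomp Require Import boolp classical_sets.
Set Implicit Arguments. Unset Strict Implicit. Unset Printing Implicit Defensive.
Import GRing.Theory.
Local Open Scope ring_scope.

Section SubringClosure.
Variables (T : nzRingType) (S : T -> Prop).
Hypothesis subS : is_subring S.

Lemma subring0 : S 0.
Proof. by case: subS => S1 SB _; rewrite -(subrr 1); apply: SB. Qed.

Lemma subringN x : S x -> S (- x).
Proof. by case: subS => _ SB _ Sx; rewrite -sub0r; apply: SB => //; apply: subring0. Qed.

Lemma subringD x y : S x -> S y -> S (x + y).
Proof. by case: subS => _ SB _ Sx Sy; rewrite -[y]opprK; apply: SB => //; apply: subringN. Qed.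

Lemma subringM x y : S x -> S y -> S (x * y).
Proof. by case: subS => _ _ SM; apply: SM. Qed.

Lemma subring_sum (I : Type) (r : seq I) (P : pred I) (F : I -> T) :
  (forall i, P i -> S (F i)) -> S (\sum_(i <- r | P i) F i).
Proof. by move=> SF; apply: big_ind => //; [apply: subring0 | apply: subringD]. Qed.

End SubringClosure.

Section LeftIdealClosure.
Variables (T : nzRingType) (M : T -> Prop).
Hypothesis idM : is_left_ideal M.

Lemma lideal0 : M 0.
Proof. by case: idM. Qed.

Lemma lidealB x y : M x -> M y -> M (x - y).
Proof. by case: idM => _ MB _; apply: MB. Qed.

Lemma lidealN x : M x -> M (- x).
Proof. by move=> Mx; rewrite -sub0r; apply: lidealB => //; apply: lideal0. Qed.

Lemma lidealD x y : M x -> M y -> M (x + y).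
Proof. by move=> Mx My; rewrite -[y]opprK; apply: lidealB => //; apply: lidealN. Qed.

Lemma lidealM r x : M x -> M (r * x).
Proof. by case: idM => _ _ MM; apply: MM. Qed.

Lemma lideal_sum (I : Type) (r : seq I) (P : pred I) (F : I -> T) :
  (forall i, P i -> M (F i)) -> M (\sum_(i <- r | P i) F i).
Proof. by move=> MF; apply: big_ind => //; [apply: lideal0 | apply: lidealD]. Qed.

End LeftIdealClosure.

Section ChainUnion.
Local Open Scope classical_set_scope.

Lemma chain_bigcup_seq (U : eqType) (F : set (set U)) (s : seq U) :
  F !=set0 -> total_on F subset -> (forall y, y \in s -> (\bigcup_(X in F) X) y) ->
  exists2 X, F X & forall y, y \in s -> X y.
Proof.
move=> [X0 FX0] totF; elim: s => [|y s IHs] sF; first by exists X0.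
have [X FX Xs] : exists2 X, F X & forall z, z \in s -> X z.
  by apply: IHs => z zs; apply: sF; rewrite inE zs orbT.
have [Y FY Yy] := sF y (mem_head y s).
have [XY|YX] := totF X Y FX FY.
- by exists Y => // z; rewrite inE => /predU1P[->|/Xs/XY].
- by exists X => // z; rewrite inE => /predU1P[->|/Xs//]; apply: YX.
Qed.

Lemma subring_bigcup (T : nzRingType) (F : set (set T)) :
  F !=set0 -> (forall X, F X -> is_subring X) -> total_on F subset ->
  is_subring (\bigcup_(X in F) X).
Proof.
move=> F0 Fsub totF; have [X0 FX0] := F0.
have common x y : (\bigcup_(X in F) X) x -> (\bigcup_(X in F) X) y ->
    exists2 X, F X & X x /\ X y.
  move=> Ux Uy; have [|X FX Xxy] := @chain_bigcup_seq _ F [:: x; y] F0 totF.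
    by move=> z; rewrite !inE => /orP[] /eqP ->.
  by exists X => //; split; apply: Xxy; rewrite !inE eqxx ?orbT.
split.
- by exists X0 => //; case: (Fsub X0 FX0).
- move=> x y Ux Uy; have [X FX [Xx Xy]] := common x y Ux Uy.
  by exists X => //; case: (Fsub X FX) => _ XB _; apply: XB.
- move=> x y Ux Uy; have [X FX [Xx Xy]] := common x y Ux Uy.
  by exists X => //; apply: subringM => //; apply: Fsub.
Qed.

End ChainUnion.

Lemma exists_maximal_subring_finite_over (T : nzRingType) (S0 : T -> Prop) (gs : seq T) :
  is_subring S0 -> (exists t, ~ S0 t) ->
  (forall S, is_subring S -> (forall x, S0 x -> S x) ->
     (forall y, y \in gs -> S y) -> forall t, S t) ->
  exists S : T -> Prop, is_maximal_subring S.
Proof.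
move=> subS0 [t0 nS0t0] gen.
pose good (S : set T) :=
  [/\ is_subring S, (forall x, S0 x -> S x) & ~ (forall y, y \in gs -> S y)].
have goodS0 : good S0 by split => // S0gs; apply: nS0t0; apply: gen.
(* The [set0] alternative makes the empty chain admissible for [Zorn_bigcup]. *)
have [A [PA Amax]] : exists A, (A = set0 \/ good A) /\
    forall B, (A `<` B)%classic -> ~ (B = set0 \/ good B).
  apply: Zorn_bigcup => F FP totF.
  have [[X0 FX0 gX0]|nogood] := pselect (exists2 X, F X & good X); last first.
    left; apply/seteqP; split => // x [X FX Xx].
    by case: (FP X FX) => [Xnil|gX]; [rewrite Xnil in Xx | case: nogood; exists X].
  have UFG : (\bigcup_(X in F) X = \bigcup_(X in F `&` good) X)%classic.
    apply/seteqP; split => x [X FX Xx]; last by exists X => //; case: FX.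
    by case: (FP X FX) => [Xnil|gX]; [rewrite Xnil in Xx | exists X].
  have totG : total_on (F `&` good)%classic subset.
    by move=> X Y [FX _] [FY _]; apply: totF.
  right; rewrite UFG; split.
  - apply: subring_bigcup totG; first by exists X0.
    by move=> X [_ []].
  - by move=> x S0x; exists X0 => //; case: gX0 => _ S0X0 _; apply: S0X0.
  - move=> Ugs; have [|X [_ [_ _ nXgs]] //] := chain_bigcup_seq _ totG Ugs.
    by exists X0.
have {PA} [subA S0A nAgs] : good A.
  case: PA => // A0; exfalso; apply: (Amax S0); last by right.
  rewrite A0; split=> // S0nil; case: subS0 => S01 _ _; exact: S0nil 1 S01.
exists A; split => //.
  apply: contrapT => Afull; apply: nAgs => y _.
  by apply: contrapT => nAy; apply: Afull; exists y.
move=> S subS AS.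
have [Sfull|nSfull] := pselect (forall x, S x); [by right | left].
move=> x Sx; apply: contrapT => nAx; apply: (Amax S).
  by split=> // SA; apply: nAx; apply: SA.
right; split=> [//|y /S0A/AS //|Sgs]; apply: nSfull; apply: gen => // y /S0A/AS //.
Qed.

Lemma maximal_left_ideal_comaximal (T : nzRingType) (M : T -> Prop) (c : T) :
  is_maximal_left_ideal M -> ~ M c -> exists u r, M u /\ 1 = u + r * c.
Proof.
case=> idM _ Mmax nMc.
pose N v := exists u r, M u /\ v = u + r * c.
have idN : is_left_ideal N.
  split.
  - by exists 0, 0; rewrite mul0r addr0; split=> //; apply: lideal0.
  - move=> _ _ [u1 [r1 [Mu1 ->]]] [u2 [r2 [Mu2 ->]]].
    exists (u1 - u2), (r1 - r2); split; first exact: lidealB.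
    by rewrite mulrBl opprD addrACA.
  - move=> r _ [u [s [Mu ->]]]; exists (r * u), (r * s); split; first exact: lidealM.
    by rewrite mulrDr mulrA.
have MN x : M x -> N x by move=> Mx; exists x, 0; rewrite mul0r addr0.
case: (Mmax N idN MN) => [NM|Nfull]; last exact: Nfull.
by case: nMc; apply: NM; exists 0, 1; rewrite mul1r add0r; split=> //; apply: lideal0.
Qed.

Lemma maximal_left_ideal_left_inv (T : nzRingType) (M : T -> Prop) :
  is_maximal_left_ideal M -> forall c, ~ M c -> exists w, M (w * c - 1).
Proof.
move=> maxM c nMc; have [idM _ _] := maxM.
have [u [r [Mu e1]]] := maximal_left_ideal_comaximal maxM nMc.
by exists r; rewrite e1 opprD addrCA subrr addr0; apply: lidealN.
Qed.

Lemma maximal_left_ideal_notin1 (T : nzRingType) (M : T -> Prop) :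
  is_maximal_left_ideal M -> ~ M 1.
Proof. by case=> idM [t nMt] _ M1; apply: nMt; rewrite -(mulr1 t); apply: lidealM. Qed.

Definition idealizer (T : nzRingType) (M : T -> Prop) (x : T) : Prop :=
  forall v, M v -> M (v * x).

Lemma idealizer_subring (T : nzRingType) (M : T -> Prop) :
  is_left_ideal M -> is_subring (idealizer M).
Proof.
move=> idM; split.
- by move=> v; rewrite mulr1.
- by move=> x y Ix Iy v Mv; rewrite mulrBr; apply: (lidealB idM); [apply: Ix | apply: Iy].
- by move=> x y Ix Iy v Mv; rewrite mulrA; apply: Iy; apply: Ix.
Qed.

Lemma maximal_subring_of_one_sided (T : nzRingType) (M : T -> Prop) (m t : T) :
  is_maximal_left_ideal M -> M m -> ~ M (m * t) ->
  exists S : T -> Prop, is_maximal_subring S.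
Proof.
move=> maxM Mm nMmt; have [idM _ _] := maxM.
have [u [r [Mu e1]]] := maximal_left_ideal_comaximal maxM nMmt.
have MI x : M x -> idealizer M x by move=> Mx v _; apply: lidealM.
apply: (@exists_maximal_subring_finite_over _ (idealizer M) [:: t]).
- exact: idealizer_subring.
- by exists t => /(_ m Mm).
- move=> S subS IS St z.
  have -> : z = z * u + (z * r * m) * t by rewrite -!mulrA -mulrDr -e1 mulr1.
  apply: subringD => //; first by apply/IS/MI/(lidealM idM).
  by apply: subringM => //; [apply/IS/MI/(lidealM idM) | apply: St; rewrite mem_head].
Qed.

Definition commute_mod (T : nzRingType) (M : T -> Prop) (a y : T) : Prop :=
  M (y * a - a * y).

Definition power_comb (T : nzRingType) m (a : T) (x d : 'I_m -> T) (j : nat) : T :=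
  \sum_i d i * (a ^+ j * x i).

Lemma monic_root_expr (T : nzRingType) (p : {poly T}) (a : T) :
  p \is monic -> p.[a] = 0 ->
  a ^+ (size p).-1 = - \sum_(l < (size p).-1) p`_l * a ^+ l.
Proof.
move=> p_monic; have lead1 := monicP p_monic; rewrite lead_coefE in lead1.
set n := (size p).-1 in lead1 *; have sp : size p = n.+1.
  by rewrite prednK // lt0n size_poly_eq0 monic_neq0.
rewrite horner_coef sp big_ord_recr /= lead1 mul1r.
by move/eqP; rewrite addrC addr_eq0 => /eqP.
Qed.

Lemma power_comb_recurrence (T : nzRingType) (p : {poly T}) m (a : T)
    (x d : 'I_m -> T) j :
  p \is monic -> (forall i, center p`_i) -> p.[a] = 0 ->
  power_comb a x d (j + (size p).-1) =
    - \sum_(l < (size p).-1) p`_l * power_comb a x d (j + l).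
Proof.
move=> p_monic p_central p_root; rewrite /power_comb.
under eq_bigr do
  rewrite exprD monic_root_expr // mulrN mulNr mulrN mulr_sumr mulr_suml mulr_sumr.
rewrite sumrN exchange_big /=; congr (- _); apply: eq_bigr => l _.
rewrite mulr_sumr; apply: eq_bigr => i _.
by rewrite exprD !mulrA -(mulrA (d i)) -(p_central l (a ^+ j)) mulrA -(p_central l (d i)).
Qed.

Section DivisionQuotient.
Variables (T : nzRingType) (M : T -> Prop).
Hypotheses (idM : is_left_ideal M) (M_right : forall x t, M x -> M (x * t)).
Hypotheses (nM1 : ~ M 1) (M_inv : forall c, ~ M c -> exists w, M (w * c - 1)).

Lemma left_inv_mod_notin c w : M (w * c - 1) -> ~ M w.
Proof.
move=> Mwc Mw; apply: nM1; have -> : 1 = w * c - (w * c - 1) by rewrite opprB addrC subrK.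
by apply: lidealB => //; apply: M_right.
Qed.

Lemma commute_mod_subring a : is_subring (commute_mod M a).
Proof.
split; rewrite /commute_mod.
- by rewrite mul1r mulr1 subrr; apply: lideal0.
- move=> y z Ky Kz; have -> : (y - z) * a - a * (y - z) = (y * a - a * y) - (z * a - a * z).
    by rewrite mulrBl mulrBr !opprD !opprK addrACA.
  exact: lidealB.
- move=> y z Ky Kz.
  have -> : y * z * a - a * (y * z) = y * (z * a - a * z) + (y * a - a * y) * z.
    by rewrite mulrBr mulrBl !mulrA addrA subrK.
  by apply: lidealD => //; [apply: lidealM | apply: M_right].
Qed.

(* In the division ring T/M the left inverse w' of w is c, so w c = 1 forces c w = 1. *)
Lemma right_inv_mod c w : M (w * c - 1) -> M (c * w - 1).
Proof.
move=> Mwc; have [w' Mw'w] := M_inv (left_inv_mod_notin Mwc).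
have Mcw' : M (c - w').
  have -> : c - w' = - ((w' * w - 1) * c) + w' * (w * c - 1).
    by rewrite mulrBl mulrBr mul1r mulr1 opprB !mulrA addrA subrK.
  by apply: lidealD => //; [apply/(lidealN idM)/M_right | apply: lidealM].
have -> : c * w - 1 = (c - w') * w + (w' * w - 1) by rewrite mulrBl addrA subrK.
by apply: lidealD => //; apply: M_right.
Qed.

Lemma commute_mod_left_inv a c w :
  commute_mod M a c -> M (w * c - 1) -> commute_mod M a w.
Proof.
rewrite /commute_mod => Mca Mwc; have Mcw := right_inv_mod Mwc.
have -> : w * a - a * w =
    - (w * a * (c * w - 1)) + (- (w * (c * a - a * c) * w) + (w * c - 1) * a * w).
  rewrite !mulrBr !mulrBl !mulr1 !mul1r !opprB !mulrA.
  by rewrite !addrA !subrK.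
apply: lidealD => //; first by apply: lidealN => //; apply: lidealM.
apply: lidealD => //; last by do 2 apply: M_right.
by apply: lidealN => //; apply: M_right; apply: lidealM.
Qed.

(* Gaussian elimination over T/M: clear the first coordinate with a row whose
   first entry is invertible, then recurse on the remaining coordinates. *)
Lemma left_dependent_mod n m : (n < m)%N -> forall v : 'I_m -> nat -> T,
  exists d : 'I_m -> T,
    (exists i, ~ M (d i)) /\ forall j, (j < n)%N -> M (\sum_i d i * v i j).
Proof.
elim: n m => [|n IHn] m ltnm v.
  by exists (fun _ => 1); split=> //; exists (Ordinal ltnm).
case: m ltnm v => [//|m] ltnm v.
have [[i0 nMvi0]|Mv0] := pselect (exists i0, ~ M (v i0 0%N)); last first.
  have [d [nzd Md]] := IHn _ (ltnW ltnm) (fun i j => v i j.+1).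
  exists d; split=> // -[_|j /Md//]; apply: lideal_sum => // i _.
  by apply: lidealM => //; apply: contrapT => nMvi; apply: Mv0; exists i.
have [w Mw] := M_inv nMvi0.
pose u (k : 'I_m) j := v (lift i0 k) j.+1 - v (lift i0 k) 0%N * w * v i0 j.+1.
have [e [[k0 nMek0] Me]] := IHn _ ltnm u.
pose s := \sum_k e k * v (lift i0 k) 0%N.
pose d (i : 'I_m.+1) := if unlift i0 i is Some k then e k else - (s * w).
have d_lift k : d (lift i0 k) = e k by rewrite /d liftK.
have d_i0 : d i0 = - (s * w) by rewrite /d unlift_none.
exists d; split; first by exists (lift i0 k0); rewrite d_lift.
move=> j ltj; rewrite (bigD1_ord i0) //= d_i0; under eq_bigr do rewrite d_lift.
case: j ltj => [_|j ltj].
  have -> : - (s * w) * v i0 0%N + s = - (s * (w * v i0 0%N - 1)).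
    by rewrite mulrBr mulr1 opprB mulNr mulrA addrC.
  by apply: lidealN => //; apply: lidealM.
have -> : - (s * w) * v i0 j.+1 + \sum_(k < m) e k * v (lift i0 k) j.+1 =
          \sum_(k < m) e k * u k j.
  rewrite /u /s; under [RHS]eq_bigr do rewrite mulrBr.
  rewrite sumrB addrC mulNr mulr_suml mulr_suml; congr (_ - _).
  by apply: eq_bigr => k _; rewrite !mulrA.
exact: Me.
Qed.

(* Normalise a relation d to have coefficient 1 at i0; then a d - d a is again a
   relation, with strictly smaller support.  Induct on the size of the support. *)
Lemma power_comb_commuting m a (x d : 'I_m -> T) :
  (forall j, M (power_comb a x d j)) -> (exists i, ~ M (d i)) ->
  exists k, [/\ forall j, M (power_comb a x k j), exists i, ~ M (k i)
              & forall i, commute_mod M a (k i)].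
Proof.
pose supp (d : 'I_m -> T) := [set i | ~~ `[< M (d i) >]].
move: {2}#|supp d| (leqnn #|supp d|) => N; elim: N d => [|N IHN] d.
  rewrite leqn0 cards_eq0 => /eqP supp0 _ [i0 nMdi0].
  have : i0 \in supp d by rewrite inE; apply/asboolPn.
  by rewrite supp0 inE.
move=> suppN Md [i0 nMdi0]; have [w Mwd] := M_inv nMdi0.
pose d' i := w * d i; pose d'' i := a * d' i - d' i * a.
have Md' j : M (power_comb a x d' j).
  have -> : power_comb a x d' j = w * power_comb a x d j.
    by rewrite mulr_sumr; apply: eq_bigr => i _; rewrite -mulrA.
  exact: lidealM.
have Md'' j : M (power_comb a x d'' j).
  have -> : power_comb a x d'' j = a * power_comb a x d' j - power_comb a x d' j.+1.
    by rewrite mulr_sumr -sumrB; apply: eq_bigr => i _; rewrite mulrBl exprS !mulrA.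
  by apply: lidealB => //; apply: lidealM.
have nMd'i0 : ~ M (d' i0).
  move=> Md'i0; apply: nM1; have -> : 1 = d' i0 - (w * d i0 - 1) by rewrite opprB addrC subrK.
  exact: lidealB.
have [Md''0|] := pselect (forall i, M (d'' i)).
  exists d'; split=> //; first by exists i0.
  by move=> i; rewrite /commute_mod -opprB; apply: lidealN (Md''0 i).
move=> /existsNP[i1 nMd''i1]; apply: (IHN d'') => //; last by exists i1.
have supp_sub : supp d'' \subset supp d :\ i0.
  apply/fintype.subsetP => i; rewrite !inE => /asboolPn nMd''i; apply/andP; split.
    apply/eqP => ei; apply: nMd''i; rewrite ei /d'' /d'.
    have -> : a * (w * d i0) - w * d i0 * a = a * (w * d i0 - 1) - (w * d i0 - 1) * a.
      by rewrite mulrBr mulrBl mulr1 mul1r opprB addrA subrK.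
    by apply: lidealB => //; [apply: lidealM | apply: M_right].
  apply/asboolPn => Mdi; apply: nMd''i; rewrite /d'' /d'.
  apply: lidealB => //; first by apply: lidealM => //; apply: lidealM.
  by apply: M_right; apply: lidealM.
have i0supp : i0 \in supp d by rewrite inE; apply/asboolPn.
move: suppN; rewrite (cardsD1 i0 (supp d)) i0supp add1n ltnS.
exact: leq_trans (subset_leq_card supp_sub).
Qed.

Section IntegralElement.
Variables (a : T) (p : {poly T}).
Hypotheses (p_monic : p \is monic) (p_central : forall i, center p`_i) (p_root : p.[a] = 0).

Lemma power_comb_mod m (x d : 'I_m -> T) :
  (forall j, (j < (size p).-1)%N -> M (power_comb a x d j)) ->
  forall j, M (power_comb a x d j).
Proof.
move=> Md; elim/ltn_ind => j IHj; case: (ltnP j (size p).-1) => [/Md //|le_n_j].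
rewrite -(subnK le_n_j) power_comb_recurrence //.
apply: lidealN => //; apply: lideal_sum => // l _.
by apply: lidealM => //; apply: IHj; rewrite -{2}(subnK le_n_j) ltn_add2l.
Qed.

Lemma dependent_commute_mod m (x : 'I_m -> T) : ((size p).-1 < m)%N ->
  exists k : 'I_m -> T, [/\ forall i, commute_mod M a (k i),
    exists i, ~ M (k i) & M (\sum_i k i * x i)].
Proof.
move=> lt_n_m; have [d [nzd Md]] := left_dependent_mod lt_n_m (fun i j => a ^+ j * x i).
have [k [Mk nzk Kk]] := power_comb_commuting (power_comb_mod Md) nzd.
exists k; split=> //; have := Mk 0%N; rewrite /power_comb.
by under eq_bigr do rewrite expr0 mul1r.
Qed.

Definition independent_commute_mod m (x : 'I_m -> T) : Prop :=
  forall k, (forall i, commute_mod M a (k i)) -> M (\sum_i k i * x i) -> forall i, M (k i).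

Lemma independent_commute_mod_size m (x : 'I_m -> T) :
  independent_commute_mod x -> (m <= (size p).-1)%N.
Proof.
move=> indx; rewrite leqNgt; apply/negP => lt_n_m.
by have [k [Kk [i nMki] Mk]] := dependent_commute_mod x lt_n_m; apply/nMki/indx.
Qed.

Lemma exists_maximal_independent_commute_mod :
  exists m, (exists x : 'I_m -> T, independent_commute_mod x) /\
            ~ exists y : 'I_m.+1 -> T, independent_commute_mod y.
Proof.
apply: contrapT => /forallNP nomax.
suff indep_all m : exists x : 'I_m -> T, independent_commute_mod x.
  have [x /independent_commute_mod_size] := indep_all (size p).-1.+1.
  by rewrite ltnn.
elim: m => [|m IHm]; first by exists (fun _ => 0) => k _ _ [].
by apply: contrapT => nindep; apply: (nomax m); split.
Qed.

Lemma commute_mod_finite_span : exists m (x : 'I_m -> T), forall z,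
  exists k : 'I_m -> T, (forall i, commute_mod M a (k i)) /\ M (z - \sum_i k i * x i).
Proof.
have [m [[x indx] nindep]] := exists_maximal_independent_commute_mod.
exists m, x => z; pose y i := if unlift ord0 i is Some i' then x i' else z.
have [k [Kk Mk [i nMki]]] : exists k : 'I_m.+1 -> T,
    [/\ forall i, commute_mod M a (k i), M (\sum_i k i * y i) & exists i, ~ M (k i)].
  apply: contrapT => nk; apply: nindep; exists y => k Kk Mk i.
  by apply: contrapT => nMki; apply: nk; exists k; split=> //; exists i.
pose r := \sum_(i' < m) k (lift ord0 i') * x i'.
have {}Mk : M (k ord0 * z + r).
  move: Mk; rewrite (bigD1_ord ord0) //= /y unlift_none.
  by under eq_bigr do rewrite liftK.
have [Mk0|nMk0] := pselect (M (k ord0)).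
  have Mr : M r.
    by rewrite -[r](addKr (k ord0 * z)) addrC; apply: lidealB => //; apply: M_right.
  case: nMki; have := indx (fun i' => k (lift ord0 i')) (fun i' => Kk _) Mr.
  by case: (unliftP ord0 i) => [i'|] -> //; apply.
have [w Mwk] := M_inv nMk0; have Kw := commute_mod_left_inv (Kk ord0) Mwk.
exists (fun i' => - (w * k (lift ord0 i'))); split.
  move=> i'; rewrite /commute_mod; set ki := k (lift ord0 i').
  have -> : - (w * ki) * a - a * - (w * ki) = - (w * (ki * a - a * ki) + (w * a - a * w) * ki).
    by rewrite mulrBr mulrBl mulNr mulrN opprK !opprD !opprK !mulrA addrA addrK.
  apply: lidealN => //; apply: lidealD => //; last exact: M_right.
  by apply: lidealM => //; apply: Kk.
have -> : z - \sum_i' - (w * k (lift ord0 i')) * x i' =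
    - ((w * k ord0 - 1) * z) + w * (k ord0 * z + r).
  rewrite mulrDr mulrBl mul1r opprB mulrA addrA subrK /r mulr_sumr -sumrN.
  by congr (_ + _); apply: eq_bigr => i' _; rewrite mulNr opprK mulrA.
by apply: lidealD => //; [apply: lidealN => //; apply: M_right | apply: lidealM].
Qed.

End IntegralElement.

Lemma commute_mod_of_mem a y : M y -> commute_mod M a y.
Proof. by move=> My; apply: lidealB => //; [apply: M_right | apply: lidealM]. Qed.

Lemma maximal_subring_of_division_quotient a b (p : {poly T}) :
  p \is monic -> (forall i, center p`_i) -> p.[a] = 0 -> ~ commute_mod M a b ->
  exists S : T -> Prop, is_maximal_subring S.
Proof.
move=> p_monic p_central p_root nKb.
have [m [x span]] := commute_mod_finite_span p_monic p_central p_root.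
apply: (@exists_maximal_subring_finite_over _ (commute_mod M a) (codom x)).
- exact: commute_mod_subring.
- by exists b.
- move=> S subS KS Sx z; have [k [Kk Mk]] := span z.
  rewrite -(subrK (\sum_i k i * x i) z); apply: subringD => //.
    exact/KS/commute_mod_of_mem.
  apply: subring_sum => // i _; apply: subringM => //; first exact/KS/Kk.
  exact/Sx/codom_f.
Qed.

End DivisionQuotient.

Theorem theorem3p6 (T : nzRingType) :
  integral_over_center T ->
  (forall x : T, jacobson x -> x = 0) ->
  (exists S : T -> Prop, is_maximal_subring S) \/ is_commutative_ring T.
Proof.
move=> integralT J0; have [commT|/existsNP[a /existsNP[b nab]]] :=
  pselect (is_commutative_ring T); [by right | left].
have [M [maxM nMab]] : exists M, is_maximal_left_ideal M /\ ~ M (a * b - b * a).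
  apply: contrapT => /forallNP noM; apply/nab/eqP; rewrite -subr_eq0; apply/eqP/J0.
  by move=> M maxM; apply: contrapT => nMab; apply: (noM M).
have [idM _ _] := maxM.
have [M_right|/existsNP[m /existsNP[t /not_implyP[Mm nMmt]]]] :=
  pselect (forall x t, M x -> M (x * t)); last first.
  exact: maximal_subring_of_one_sided maxM Mm nMmt.
have nKb : ~ commute_mod M a b.
  by rewrite /commute_mod -opprB => /(lidealN idM); rewrite opprK.
have [p [p_monic _ p_central p_root]] := integralT a.
exact: (maximal_subring_of_division_quotient idM M_right (maximal_left_ideal_notin1 maxM)
  (maximal_left_ideal_left_inv maxM) p_monic p_central p_root nKb).
Qed.
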